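(* Let $n\ge2$, $d\ge1$, $r\ge3$ with $n\ge d$ and $dr\equiv0\pmod n$. Then $Q_n(d,r)$ is $G$-orbit proportional if and only if $n\equiv 0\pmod d$.
   Context: $\mathbb{Z}_2^n=\{0,1\}^n$ with coordinatewise addition mod 2; $e_i$ is the $i$-th standard basis vector, subscripts read modulo $n$; $\sigma^j(b)$ is the vector with $\sigma^j(b)_{i+j}=b_i$ (indices mod $n$). $G$ is the group on $\mathbb{Z}_2^n\times\mathbb{Z}_r$ with multiplication $(a,x)(b,y)=(a+\sigma^{dx}(b),x+y)$; $Q_n(d,r)$ is its Cayley graph with connection set $\{(0_n,1),(0_n,r-1),(e_1,0),\dots,(e_d,0)\}$, so $(a,x)$ is adjacent to $(a+e_{i+dx},x)$ for $1\le i\le d$ and to $(a,x\pm1)$. $G$ acts on the graph by left multiplication $u\mapsto gu$, and its orbits on edges are $E_0=\{\{(a,x),(a,x+1)\}\}$ and $E_i=\{\{(a,x),(a+e_{i+dx},x)\}\}$, $1\le i\le d$. A graph $X$ with edge partition into $H$-orbits $E_0,\dots,E_k$ is $H$-orbit proportional if for every pair of vertices $u,v$, every shortest $u$–$v$ path $P$ and every $u$–$v$ path $P'$ satisfy $|E(P)\cap E_i|\le|E(P')\cap E_i|$ for all $i$. *)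

From mathcomp Require Import all_boot.
Set Implicit Arguments. Unset Strict Implicit. Unset Printing Implicit Defensive.

(* Vertices of Q_n(d,r): pairs (a, x) with a in Z_2^n (boolean vectors indexed
   by 'I_n, coordinate k <-> e_k with indices read mod n) and x in Z_r. *)
Definition QV (n r : nat) : finType := ({ffun 'I_n -> bool} * 'I_r)%type.

Definition flip n (a : {ffun 'I_n -> bool}) (j : nat) : {ffun 'I_n -> bool} :=
  [ffun k : 'I_n => a k (+) (val k == j %% n)].

Definition inE0 n r (u v : QV n r) : bool :=
  (u.1 == v.1) &&
  ((val v.2 == (val u.2 + 1) %% r) || (val u.2 == (val v.2 + 1) %% r)).

Definition inEi n r (d i : nat) (u v : QV n r) : bool :=
  (u.2 == v.2) && (v.1 == flip u.1 (i + d * val u.2)).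

Definition inE n r (d i : nat) (u v : QV n r) : bool :=
  if i == 0 then inE0 u v else inEi d i u v.

Definition Qadj n d r (u v : QV n r) : bool :=
  inE0 u v || [exists i : 'I_d.+1, (0 < val i) && inEi d i u v].

(* p is (the list of vertices after u of) a u--v path: consecutive vertices
   adjacent, all vertices distinct, ending at v *)
Definition is_Qpath n d r (u v : QV n r) (p : seq (QV n r)) : Prop :=
  [/\ path (@Qadj n d r) u p, uniq (u :: p) & last u p = v].

Definition countE n r d i (u : QV n r) (p : seq (QV n r)) : nat :=
  count (fun e => inE d i e.1 e.2) (zip (u :: p) p).

(* G-orbit proportionality, with the edge orbits E_0,...,E_d of the context *)
Definition orbit_proportional n d r : Prop :=
  forall (u v : QV n r) (p p' : seq (QV n r)),
    is_Qpath d u v p -> is_Qpath d u v p' ->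
    (forall q, is_Qpath d u v q -> size p <= size q) ->
    forall i, i <= d -> countE d i u p <= countE d i u p'.

From Pilot Require Import Defs.
From mathcomp Require Import all_boot.
Set Implicit Arguments. Unset Strict Implicit. Unset Printing Implicit Defensive.

(* A walk in Q_n(d,r) is a sequence of moves: changing layer, or taking an edge of
   class E_i at layer x, which flips coordinate i + dx mod n.  The end point of a walk
   is determined by its end layer and by the parity with which each coordinate is
   flipped, so cancelling two flips of the same coordinate gives a shorter walk to the
   same vertex using no more edges of any class.  Hence a shortest path flips pairwise
   distinct coordinates, and any other path reduces to one flipping exactly the same
   set of coordinates.  When d | n, the class of a flip of coordinate c is read off
   from c mod d, so both paths have the same number of E_i-edges for i >= 1, and the
   shortest one has no more layer edges.  When d does not divide n, pick x with
   dx = gcd(d,n) mod n: going once around the layers with a flip of class 1 at layer x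
   reaches the same vertex as the single edge of class gcd(d,n) + 1 <= d, a class that
   walk never uses. *)

Lemma last_scanl (S T : Type) (f : S -> T -> S) x s : last x (scanl f x s) = foldl f x s.
Proof. by elim: s x => //= y s IH x; rewrite IH. Qed.

Lemma zip_cons_cat (T : Type) (y z : T) s1 s2 :
  zip (y :: s1 ++ z :: s2) (s1 ++ z :: s2) =
  zip (y :: s1) s1 ++ (last y s1, z) :: zip (z :: s2) s2.
Proof. by elim: s1 y => //= a s1 IH y; rewrite IH. Qed.

Lemma loop_erasure (T : eqType) (e : rel T) x w : path e x w ->
  exists w', [/\ path e x w', uniq (x :: w'), last x w' = last x w,
    size w' <= size w &
    forall P, count P (zip (x :: w') w') <= count P (zip (x :: w) w)].
Proof.
elim: w x => [|y w IH] x /=; first by exists [::].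
case/andP=> exy /IH[w1 [pw1 uw1 lw1 sw1 cw1]].
have [xw1|xNw1] := boolP (x \in y :: w1); last first.
  exists (y :: w1); split => //=; first by rewrite exy.
  - by rewrite xNw1.
  - by move=> P; rewrite leq_add2l.
move: xw1; rewrite in_cons => /predU1P[xy|].
  subst y; exists w1; split => //; first exact: leqW.
  by move=> P; apply: leq_trans (leq_addl _ _).
move=> xw1; move: pw1 uw1 lw1 sw1 cw1; case/splitPr: xw1 => p1 p2 pw1 uw1 lw1 sw1 cw1.
exists p2; split.
- by move: pw1; rewrite cat_path => /andP[_ /andP[]].
- by move: uw1; rewrite -cat_cons cat_uniq => /and3P[].
- by rewrite -lw1 last_cat.
- apply: leqW (leq_trans _ sw1); rewrite size_cat /=.
  exact: leq_trans (leqnSn _) (leq_addl _ _).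
- move=> P; apply: leq_trans (leq_addl _ _); apply: leq_trans (cw1 P).
  by rewrite zip_cons_cat count_cat /= addnA leq_addl.
Qed.

Lemma eqn_modn_pos n i j : 0 < i <= n -> 0 < j <= n -> (i %% n == j %% n) = (i == j).
Proof.
have modE k : 0 < k <= n -> k %% n = (if k == n then 0 else k).
  case/andP=> k_gt0; rewrite leq_eqVlt => /predU1P[->|k_lt]; first by rewrite modnn eqxx.
  by rewrite modn_small // ltn_eqF.
move=> i_range j_range; rewrite (modE _ i_range) (modE _ j_range).
move: i_range j_range => /andP[i_gt0 _] /andP[j_gt0 _].
case: ifP => [/eqP-> | i_neq]; case: ifP => [/eqP-> | j_neq]; rewrite ?eqxx //.
- by rewrite [n == j]eq_sym j_neq eq_sym eqn0Ngt j_gt0.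
- by rewrite i_neq eqn0Ngt i_gt0.
Qed.

Lemma modn_succ_neq r t : 1 < r -> t < r -> (t + 1) %% r != t.
Proof.
move=> r_gt1 t_lt; rewrite addn1; case: (ltngtP t.+1 r) => [lt|gt|eq].
- by rewrite modn_small // neq_ltn ltnSn orbT.
- by rewrite ltnNge t_lt in gt.
- by rewrite -eq modnn; apply: contraTneq r_gt1 => t0; rewrite -eq -t0.
Qed.

Lemma gcdn_ltl d n : 0 < d -> ~~ (d %| n) -> gcdn d n < d.
Proof.
move=> d_gt0 d_ndvd; rewrite ltn_neqAle dvdn_leq ?dvdn_gcdl // andbT.
by apply: contra d_ndvd => /eqP/gcdn_idPl.
Qed.

Lemma mul_modn_gcdn d n r : 0 < d -> 0 < r -> n %| d * r ->
  exists2 x, x < r & d * x = gcdn d n %[mod n].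
Proof.
move=> d_gt0 r_gt0 /dvdnP[t drE]; have [km kn kmE _] := egcdnP n d_gt0.
exists (km %% r); first by rewrite ltn_pmod.
have -> : d * (km %% r) = d * km %[mod n].
  by rewrite [in RHS](divn_eq km r) mulnDr mulnCA drE mulnA modnMDl.
by rewrite mulnC kmE modnMDl.
Qed.

Section Walks.

Variables n d r : nat.

(* A walk is coded by its moves: [inl y] goes to the layer [y], [inr i] follows
   the edge of class [E_i] at the current layer. *)
Definition Qmove := ('I_r + nat)%type.

Definition move_layer (l : 'I_r) (m : Qmove) : 'I_r := if m is inl y then y else l.

Definition move_class (m : Qmove) : nat := if m is inr i then i else 0.

Definition class_count i (ms : seq Qmove) : nat := count (fun m => move_class m == i) ms.

Definition move_valid (l : 'I_r) (m : Qmove) : bool :=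
  match m with
  | inl y => (val y == (val l + 1) %% r) || (val l == (val y + 1) %% r)
  | inr i => 0 < i <= d
  end.

Fixpoint moves_valid (l : 'I_r) (ms : seq Qmove) : bool :=
  if ms is m :: ms' then move_valid l m && moves_valid (move_layer l m) ms' else true.

Definition end_layer (l : 'I_r) (ms : seq Qmove) : 'I_r := foldl move_layer l ms.

Fixpoint flip_coords (l : 'I_r) (ms : seq Qmove) : seq nat :=
  match ms with
  | [::] => [::]
  | inl y :: ms' => flip_coords y ms'
  | inr i :: ms' => (i + d * l) %% n :: flip_coords l ms'
  end.

Definition Qstep (x : QV n r) (m : Qmove) : QV n r :=
  match m with
  | inl y => (x.1, y)
  | inr i => (flip x.1 (i + d * x.2), x.2)
  end.

Lemma Qstep_layer x m : (Qstep x m).2 = move_layer x.2 m.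
Proof. by case: m. Qed.

Lemma foldl_Qstep x ms : foldl Qstep x ms =
  ([ffun k : 'I_n => x.1 k (+) odd (count_mem (val k) (flip_coords x.2 ms))],
   end_layer x.2 ms).
Proof.
elim: ms x => [|m ms IH] [a l] /=.
  by congr pair; apply/ffunP => k; rewrite ffunE addbF.
rewrite IH; case: m => [y|j] //=; congr pair; apply/ffunP => k.
by rewrite !ffunE oddD oddb addbA [val k == _]eq_sym.
Qed.

Lemma moves_valid_cat l ms1 ms2 :
  moves_valid l (ms1 ++ ms2) = moves_valid l ms1 && moves_valid (end_layer l ms1) ms2.
Proof. by elim: ms1 l => //= m ms1 IH l; rewrite IH andbA. Qed.

Lemma flip_coords_cat l ms1 ms2 :
  flip_coords l (ms1 ++ ms2) = flip_coords l ms1 ++ flip_coords (end_layer l ms1) ms2.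
Proof. by elim: ms1 l => //= m ms1 IH l; case: m => [y|j] /=; rewrite IH. Qed.

Lemma size_moves l ms : moves_valid l ms ->
  size ms = class_count 0 ms + size (flip_coords l ms).
Proof.
elim: ms l => //= m ms IH l /andP[vm /IH{}IH].
by case: m vm IH => [y|j] /= => [_ ->|/andP[j_gt0 _] ->]; rewrite ?addnS // eqn0Ngt j_gt0.
Qed.

Lemma class_count_flip_coords l ms i : d %| n -> 0 < i <= d -> moves_valid l ms ->
  class_count i ms = count (fun c => c %% d == i %% d) (flip_coords l ms).
Proof.
move=> d_dvd_n /andP[i_gt0 i_le_d]; rewrite /class_count.
elim: ms l => //= m ms IH l /andP[vm /IH{}IH].
case: m vm IH => [y|j] /= => [_ <-|/andP[j_gt0 j_le_d] <-].
  by rewrite eq_sym eqn0Ngt i_gt0.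
by rewrite modn_dvdm // [j + _]addnC [d * l]mulnC modnMDl eqn_modn_pos ?j_gt0 ?i_gt0.
Qed.

Hypotheses (n_gt0 : 0 < n) (d_le_n : d <= n) (r_gt1 : 1 < r).

Lemma flip_coords_ltn l ms c : c \in flip_coords l ms -> c < n.
Proof.
elim: ms l => //= m ms IH l.
by case: m => [y|j] /=; [exact: IH | rewrite in_cons => /predU1P[->|/IH//]; rewrite ltn_pmod].
Qed.

Lemma flip_eq (a : {ffun 'I_n -> bool}) j k : (flip a j == flip a k) = (j %% n == k %% n).
Proof.
apply/eqP/eqP => [|jk]; last by apply/ffunP => t; rewrite !ffunE jk.
move/(congr1 (fun f : {ffun 'I_n -> bool} => f (Ordinal (ltn_pmod j n_gt0)))).
by rewrite !ffunE /= eqxx; case: (a _); case: eqP.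
Qed.

Lemma flip_neq (a : {ffun 'I_n -> bool}) j : a != flip a j.
Proof.
apply/eqP => /(congr1 (fun f : {ffun 'I_n -> bool} => f (Ordinal (ltn_pmod j n_gt0)))).
by rewrite ffunE /= eqxx; case: (a _).
Qed.

Lemma inE_Qstep x m i : move_valid x.2 m -> i <= d ->
  Defs.inE d i x (Qstep x m) = (move_class m == i).
Proof.
rewrite /Defs.inE /inE0 /inEi; case: m => [y|j] /= => [vy|/andP[j_gt0 j_le_d]] i_le_d.
  rewrite eqxx vy; case: i i_le_d => //= i _.
  suff /negbTE-> : x.2 != y by [].
  apply/eqP => xy; move: vy.
  by rewrite xy orbb eq_sym (negbTE (modn_succ_neq r_gt1 (ltn_ord y))).
case: (posnP i) => [->|i_gt0]; first by rewrite (negbTE (flip_neq _ _)) eqn0Ngt j_gt0.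
by rewrite eqxx flip_eq eqn_modDr eqn_modn_pos ?j_gt0 ?i_gt0 ?(leq_trans _ d_le_n) //.
Qed.

Lemma countE_Qwalk x ms i : moves_valid x.2 ms -> i <= d ->
  countE d i x (scanl Qstep x ms) = class_count i ms.
Proof.
move=> + i_le_d; elim: ms x => //= m ms IH x /andP[vm vms].
rewrite /countE /= -/(countE d i _ (scanl Qstep _ ms)) inE_Qstep // IH //.
by rewrite Qstep_layer.
Qed.

Lemma Qadj_Qstep x m : move_valid x.2 m -> Qadj d x (Qstep x m).
Proof.
rewrite /Qadj /inE0; case: m => [y|j] /= => [->|/andP[j_gt0 j_le_d]]; first by rewrite eqxx.
apply/orP; right; apply/existsP; exists (Ordinal (j_le_d : j < d.+1)).
by rewrite /inEi /= j_gt0 !eqxx.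
Qed.

Lemma path_Qwalk x ms : moves_valid x.2 ms -> path (@Qadj n d r) x (scanl Qstep x ms).
Proof.
elim: ms x => //= m ms IH x /andP[vm vms].
by rewrite Qadj_Qstep // IH // Qstep_layer.
Qed.

Lemma Qpath_moves x p : path (@Qadj n d r) x p ->
  exists2 ms, moves_valid x.2 ms & scanl Qstep x ms = p.
Proof.
elim: p x => [|y p IH] x /=; first by exists [::].
case/andP=> xy /IH[ms + <-].
suff [m vm <-] : exists2 m, move_valid x.2 m & Qstep x m = y.
  by move=> vms; exists (m :: ms); rewrite //= vm -Qstep_layer.
case/orP: xy => [/andP[/eqP x1 vy] | /existsP[i /andP[i_gt0 /andP[/eqP x2 /eqP y1]]]].
  by exists (inl y.2); rewrite //= x1; case: (y).
exists (inr (val i)); first by rewrite /= i_gt0 -ltnS ltn_ord.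
by rewrite /= -y1 x2; case: (y).
Qed.

Lemma Qpath_of_moves x ms : moves_valid x.2 ms ->
  exists q, [/\ is_Qpath d x (foldl Qstep x ms) q, size q <= size ms &
    forall i, i <= d -> countE d i x q <= class_count i ms].
Proof.
move=> vms; have [q [pq uq lq sq cq]] := loop_erasure (path_Qwalk vms).
exists q; split; first by split; rewrite // lq last_scanl.
- by rewrite -(size_scanl Qstep x).
- move=> i i_le_d; rewrite -(countE_Qwalk vms i_le_d).
  exact: (cq (fun e => Defs.inE d i e.1 e.2)).
Qed.

(* [ms'] reaches the same vertex as [ms] using no more edges of any class. *)
Definition reduct (l : 'I_r) (ms' ms : seq Qmove) : Prop :=
  [/\ moves_valid l ms', end_layer l ms' = end_layer l ms,
      forall k, odd (count_mem k (flip_coords l ms')) = odd (count_mem k (flip_coords l ms)) &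
      forall i, class_count i ms' <= class_count i ms].

Lemma reduct_refl l ms : moves_valid l ms -> reduct l ms ms.
Proof. by split. Qed.

Lemma reduct_trans l ms1 ms2 ms3 : reduct l ms1 ms2 -> reduct l ms2 ms3 -> reduct l ms1 ms3.
Proof.
case=> v1 e12 o12 c12 [_ e23 o23 c23]; split => // [|k|i].
- exact: etrans e12 e23.
- by rewrite o12.
- exact: leq_trans (c12 i) (c23 i).
Qed.

Lemma reduct_cons l m ms' ms : move_valid l m -> reduct (move_layer l m) ms' ms ->
  reduct l (m :: ms') (m :: ms).
Proof.
move=> vm [v' e o c]; split => [|||i]; rewrite /= ?vm //.
- by move=> k; case: m {vm v' e c} o => [y|j] o /=; rewrite ?oddD o.
- by rewrite leq_add2l.
Qed.

Lemma foldl_reduct x ms' ms : reduct x.2 ms' ms -> foldl Qstep x ms' = foldl Qstep x ms.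
Proof.
by case=> _ e o _; rewrite !foldl_Qstep e; congr pair; apply/ffunP => k; rewrite !ffunE o.
Qed.

Lemma size_reduct l ms' ms : moves_valid l ms -> reduct l ms' ms ->
  size (flip_coords l ms') < size (flip_coords l ms) -> size ms' < size ms.
Proof.
move=> vms [v' _ _ c] lt; rewrite (size_moves v') (size_moves vms) -addnS.
exact: leq_add (c 0) lt.
Qed.

Lemma remove_flip_coord l ms c : moves_valid l ms -> c \in flip_coords l ms ->
  exists ms', [/\ moves_valid l ms', end_layer l ms' = end_layer l ms,
    flip_coords l ms' = rem c (flip_coords l ms) &
    forall i, class_count i ms' <= class_count i ms].
Proof.
elim: ms l => //= m ms IH l /andP[vm vms].
case: m vm vms => [y|j] /= vm vms.
  case/(IH _ vms) => ms' [v' e f k]; exists (inl y :: ms').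
  by split => //= [|i]; rewrite ?vm // leq_add2l.
rewrite in_cons eq_sym; have [-> _|c_neq /(IH _ vms)] := eqVneq c ((j + d * l) %% n).
  by exists ms; split => //= i; exact: leq_addl.
case=> ms' [v' e f k]; exists (inr j :: ms').
by split => //= [||i]; rewrite ?vm ?f ?leq_add2l.
Qed.

Lemma cancel_flip_pair l ms : moves_valid l ms -> ~~ uniq (flip_coords l ms) ->
  exists2 ms', reduct l ms' ms & size (flip_coords l ms') < size (flip_coords l ms).
Proof.
elim: ms l => //= m ms IH l /andP[vm vms].
case: m vm vms => [y|j] /= vm vms.
  by case/(IH _ vms) => ms' red lt; exists (inl y :: ms'); first exact: reduct_cons.
set c := (j + d * l) %% n; rewrite negb_and negbK.
have [c_in _|c_notin /= /(IH _ vms)] := boolP (c \in flip_coords l ms); last first.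
  by case=> ms' red lt; exists (inr j :: ms'); first exact: reduct_cons.
have [ms' [v' e f k]] := remove_flip_coord vms c_in.
exists ms'; last by rewrite f size_rem // ltnS leq_pred.
split => // [k0|i]; last exact: leq_trans (k i) (leq_addl _ _).
by rewrite f /= (permP (perm_to_rem c_in)) /= -/c !oddD addbA addbb.
Qed.

Lemma reduce_moves l ms : moves_valid l ms ->
  exists2 ms', reduct l ms' ms & uniq (flip_coords l ms').
Proof.
have [k] := ubnP (size (flip_coords l ms)); elim: k ms => // k IH ms lt_k vms.
have [uniq_ms|/(cancel_flip_pair vms)[ms1 red1 lt1]] := boolP (uniq (flip_coords l ms)).
  by exists ms; first exact: reduct_refl.
have [v1 _ _ _] := red1.
have [ms2 red2 uniq2] := IH ms1 (leq_trans lt1 lt_k) v1.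
by exists ms2; first exact: reduct_trans red2 red1.
Qed.

Lemma shortest_uniq_flip_coords x ms : moves_valid x.2 ms ->
  (forall q, is_Qpath d x (foldl Qstep x ms) q -> size ms <= size q) ->
  uniq (flip_coords x.2 ms).
Proof.
move=> vms shortest; apply/contraT => /(cancel_flip_pair vms)[ms' red lt].
have [v' _ _ _] := red.
have [q [Qq size_q _]] := Qpath_of_moves v'.
rewrite (foldl_reduct red) in Qq.
by move: (size_reduct vms red lt); rewrite ltnNge (leq_trans (shortest q Qq) size_q).
Qed.

Lemma perm_flip_coords x ms1 ms2 :
  uniq (flip_coords x.2 ms1) -> uniq (flip_coords x.2 ms2) ->
  foldl Qstep x ms1 = foldl Qstep x ms2 -> perm_eq (flip_coords x.2 ms1) (flip_coords x.2 ms2).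
Proof.
move=> u1 u2; rewrite !foldl_Qstep => -[/ffunP same _]; apply: uniq_perm => // c.
have [c_lt|c_ge] := ltnP c n.
  by move: (same (Ordinal c_lt)); rewrite !ffunE /= !count_uniq_mem // !oddb => /addbI.
have notin ms : c \notin flip_coords x.2 ms.
  by apply/negP => /flip_coords_ltn; rewrite ltnNge c_ge.
by rewrite !(negbTE (notin _)).
Qed.

Lemma orbit_proportional_dvd : d %| n -> orbit_proportional n d r.
Proof.
move=> d_dvd_n u v p p' [pp _ lp] [pp' _ lp'] shortest i i_le_d.
have [ms vms ep] := Qpath_moves pp; have [ms' vms' ep'] := Qpath_moves pp'.
have end_ms : foldl Qstep u ms = v by rewrite -last_scanl ep.
have end_ms' : foldl Qstep u ms' = v by rewrite -last_scanl ep'.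
have uniq_ms : uniq (flip_coords u.2 ms).
  apply: shortest_uniq_flip_coords => // q; rewrite end_ms -(size_scanl Qstep u) ep.
  exact: shortest.
have [rms red uniq_rms] := reduce_moves vms'.
have [v_r _ _ le_class] := red.
have [q [Qq size_q _]] := Qpath_of_moves v_r.
rewrite (foldl_reduct red) end_ms' in Qq.
have le_size : size ms <= size rms.
  by rewrite -(size_scanl Qstep u) ep (leq_trans (shortest q Qq) size_q).
have perm_fc : perm_eq (flip_coords u.2 ms) (flip_coords u.2 rms).
  by apply: perm_flip_coords; rewrite // (foldl_reduct red) end_ms end_ms'.
rewrite -ep -ep' !countE_Qwalk //; apply: leq_trans (le_class i).
case: i i_le_d => [|i] i_le_d.
  by move: le_size; rewrite (size_moves vms) (size_moves v_r) (perm_size perm_fc) leq_add2r.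
have i_range : 0 < i.+1 <= d := i_le_d.
rewrite (class_count_flip_coords d_dvd_n i_range vms).
by rewrite (class_count_flip_coords d_dvd_n i_range v_r) (permP perm_fc).
Qed.

Fixpoint climb (l : 'I_r) k : seq Qmove :=
  if k is k'.+1 then inl (ordS l) :: climb (ordS l) k' else [::].

Lemma climb_valid l k : moves_valid l (climb l k).
Proof. by elim: k l => //= k IH l; rewrite IH andbT addn1 eqxx. Qed.

Lemma end_layer_climb l k : val (end_layer l (climb l k)) = (l + k) %% r.
Proof.
elim: k l => [|k IH] l; first by rewrite addn0 modn_small.
by rewrite /end_layer /= -/(end_layer _ _) IH /= modnDml addSnnS.
Qed.

Lemma flip_coords_climb l k : flip_coords l (climb l k) = [::].
Proof. by elim: k l => //= k IH l; exact: IH. Qed.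

Lemma class_count_climb l k i : class_count i.+1 (climb l k) = 0.
Proof. by elim: k l => //= k IH l; rewrite /class_count /= -/(class_count _ _) IH. Qed.

Lemma dvd_of_orbit_proportional : 0 < d -> n %| d * r -> orbit_proportional n d r -> d %| n.
Proof.
move=> d_gt0 n_dvd_dr prop; apply/contraT => d_ndvd_n.
set g := gcdn d n; have g_lt_d : g < d := gcdn_ltl d_gt0 d_ndvd_n.
have g_gt0 : 0 < g by rewrite gcdn_gt0 d_gt0.
have r_gt0 : 0 < r := ltnW r_gt1.
have [x x_lt_r dxE] := mul_modn_gcdn d_gt0 r_gt0 n_dvd_dr.
pose l0 := Ordinal r_gt0; pose lx := end_layer l0 (climb l0 x).
pose u : QV n r := ([ffun => false], l0); pose v := Qstep u (inr g.+1).
pose ms := climb l0 x ++ inr 1 :: climb lx (r - x).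
have vms : moves_valid u.2 ms by rewrite moves_valid_cat climb_valid /= climb_valid d_gt0.
have lxE : val lx = x by rewrite end_layer_climb add0n modn_small.
have end_ms : foldl Qstep u ms = v.
  rewrite foldl_Qstep flip_coords_cat flip_coords_climb /= flip_coords_climb.
  congr pair.
    apply/ffunP => k; rewrite !ffunE /= addn0 oddb muln0 addn0 eq_sym lxE.
    by rewrite -modnDmr dxE modnDmr add1n.
  apply: val_inj; rewrite /end_layer foldl_cat -/lx /= -/(end_layer _ _).
  by rewrite end_layer_climb lxE subnKC ?modnn // ltnW.
have u_neq_v : u != v by rewrite xpair_eqE negb_and flip_neq.
have Qv : is_Qpath d u v [:: v] by split; rewrite //= ?Qadj_Qstep ?mem_seq1 ?u_neq_v.
have [q [Qq _ count_q]] := Qpath_of_moves vms; rewrite end_ms in Qq.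
have shortest q' : is_Qpath d u v q' -> size [:: v] <= size q'.
  by case: q' => [[_ _ /= vu]|]; first by rewrite vu eqxx in u_neq_v.
have := prop u v [:: v] q Qv Qq shortest g.+1 g_lt_d.
rewrite (countE_Qwalk (ms := [:: inr g.+1])) //=; last by rewrite g_lt_d.
rewrite eqxx => /leq_trans/(_ (count_q _ g_lt_d)).
rewrite /class_count count_cat /= -!/(class_count _ _) !class_count_climb.
by rewrite eqSS eq_sym (gtn_eqF g_gt0).
Qed.

End Walks.

Theorem mainTheorem17 (n d r : nat) :
  2 <= n -> 1 <= d -> 3 <= r -> d <= n -> d * r %% n = 0 ->
  (orbit_proportional n d r <-> d %| n).
Proof.
move=> n_ge2 d_gt0 r_ge3 d_le_n dr_mod_n.
have n_gt0 : 0 < n := ltnW n_ge2.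
have r_gt1 : 1 < r := ltnW r_ge3.
split; first by apply: dvd_of_orbit_proportional; rewrite // /dvdn dr_mod_n.
exact: orbit_proportional_dvd.
Qed.
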